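(* Let $m,n$ be positive integers, let $\mathbf{0}=(0,\dots,0)$ and let $\mathbf{b}$ be any vertex of $\mathcal{CSR}(m,n)$. Then the distance between $\mathbf{0}$ and $\mathbf{b}$ in $\mathcal{CSR}(m,n)$ is $d(\mathbf{0},\mathbf{b})=m-\tau(\mathbf{b})$.
   Context: For positive integers $m,n$, the cyclic simplicial rook graph $\mathcal{CSR}(m,n)$ is the graph whose vertices are the vectors $(a_1,\dots,a_m)\in\mathbb{Z}_n^m$ with $a_1+\cdots+a_m\equiv 0 \pmod n$, two vertices being adjacent if and only if their vectors differ in exactly two coordinates. The distance $d(u,v)$ is the number of edges of a shortest path between $u$ and $v$. For a vertex $\mathbf{b}=(b_1,\dots,b_m)$, a zero partitioning of size $t$ for $\mathbf{b}$ is a partition of $[m]=\{1,\dots,m\}$ into $t$ parts $P_1,\dots,P_t$ such that $\sum_{j\in P_i} b_j\equiv 0\pmod n$ for every $i\in[t]$; the zero partitioning number $\tau(\mathbf{b})$ is the maximum $t$ for which a zero partitioning of size $t$ for $\mathbf{b}$ exists. *)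

From mathcomp Require Import all_boot.
Set Implicit Arguments. Unset Strict Implicit. Unset Printing Implicit Defensive.

(* Vertices of CSR(m,n): vectors in Z_n^m (entries represented by 'I_n,
   i.e. residues 0..n-1) with coordinate sum = 0 mod n. *)
Definition vec (m n : nat) := {ffun 'I_m -> 'I_n}.

Definition is_vertex m n (a : vec m n) : bool :=
  (\sum_(i < m) (a i : nat)) %% n == 0.

Definition csr_adj m n (u v : vec m n) : bool :=
  [&& is_vertex u, is_vertex v & #|[set i | u i != v i]| == 2].

Definition walk_len m n (k : nat) (u v : vec m n) : Prop :=
  is_vertex u /\
  exists p : seq (vec m n), [/\ size p = k, path (@csr_adj m n) u p & last u p = v].

Definition csr_dist_is m n (u v : vec m n) (d : nat) : Prop :=
  walk_len d u v /\ forall k, walk_len k u v -> d <= k.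

Definition zero_partitioning m n (b : vec m n) (P : {set {set 'I_m}}) : bool :=
  partition P [set: 'I_m] &&
  [forall B in P, (\sum_(j in B) (b j : nat)) %% n == 0].

Definition tau m n (b : vec m n) : nat :=
  \max_(P : {set {set 'I_m}} | zero_partitioning b P) #|P|.

Definition zero_vec m n (hn : 0 < n) : vec m n := [ffun _ => Ordinal hn].

From mathcomp Require Import all_boot zify.
Set Implicit Arguments. Unset Strict Implicit. Unset Printing Implicit Defensive.

(* An edge changes two coordinates i, j and preserves v_i + v_j mod n.
   Lower bound: along a walk from 0 keep a labelling of the coordinates all of
   whose classes have zero sum.  After a move on i, j, merging the classes of i
   and j restores this and loses at most one class, so after k moves the
   classes form a zero partitioning of b with at least m - k parts.
   Upper bound: fix a zero partitioning P of b with tau(b) parts.  In a block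
   with two wrong coordinates j, s, set j to b_j and compensate at s.  Block
   sums stay congruent to those of b, so no block ever has exactly one wrong
   coordinate, and each move lowers the sum over the blocks of
   (#wrong coordinates - 1), which is at most m - |P| at the start. *)

Lemma modnD_cancel n a b x y : a + x = b + y -> x = y %[mod n] -> a = b %[mod n].
Proof.
move=> e exy; apply/eqP; rewrite -(eqn_modDr x) e.
by rewrite -modnDmr -exy modnDmr.
Qed.

Section BalancedMoves.
Variables (m n : nat).
Implicit Types (v w : vec m n) (S : {set 'I_m}).

Definition vsum v S : nat := \sum_(x in S) (v x : nat).

Lemma is_vertexE v : is_vertex v = (n %| vsum v setT).
Proof. by rewrite /is_vertex /vsum; under eq_bigl do rewrite in_setT. Qed.

Lemma vsum_agree_off i j v w S : i != j -> i \in S -> j \in S ->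
  (forall x, x != i -> x != j -> v x = w x) ->
  vsum v S + (w i + w j) = vsum w S + (v i + v j).
Proof.
move=> nij iS jS vw; rewrite /vsum (bigD1 i) // [in RHS](bigD1 i) //=.
rewrite (bigD1 j) /=; last by rewrite jS eq_sym.
rewrite [in RHS](bigD1 j) /=; last by rewrite jS eq_sym.
rewrite [in RHS](eq_bigr (fun x => v x : nat)) => [|x /andP[/andP[_ xi] xj]];
  last by rewrite vw.
by move: (\sum_(k | _) _) => s; lia.
Qed.

Definition balanced_move i j v w :=
  [/\ i != j, forall x, x != i -> x != j -> v x = w x
    & v i + v j = w i + w j %[mod n]].

Lemma vsum_balanced_in i j v w S : balanced_move i j v w ->
  i \in S -> j \in S -> vsum v S = vsum w S %[mod n].
Proof.
by case=> nij vw eij iS jS; apply: modnD_cancel (vsum_agree_off nij iS jS vw) _.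
Qed.

Lemma vsum_balanced_out i j v w S : balanced_move i j v w ->
  i \notin S -> j \notin S -> vsum v S = vsum w S.
Proof.
case=> _ vw _ iS jS; apply: eq_bigr => x xS.
by rewrite vw //; [apply: contraNneq iS | apply: contraNneq jS] => <-.
Qed.

Lemma is_vertex_balanced i j v w :
  balanced_move i j v w -> is_vertex v -> is_vertex w.
Proof.
by move=> mv; rewrite !is_vertexE /dvdn (vsum_balanced_in mv) ?in_setT.
Qed.

Lemma csr_adj_balanced v w : csr_adj v w -> exists i j, balanced_move i j v w.
Proof.
case/and3P; rewrite !is_vertexE => /eqP v0 /eqP w0 /cards2P [i [j [nij dvw]]].
have vw x : x != i -> x != j -> v x = w x.
  move=> xi xj; apply/eqP; apply: contraT => vwx.
  have : x \in [set x | v x != w x] by rewrite inE.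
  by rewrite dvw !inE (negbTE xi) (negbTE xj).
exists i, j; split=> //.
have := vsum_agree_off nij (in_setT i) (in_setT j) vw.
rewrite addnC [RHS]addnC => /esym /modnD_cancel; apply.
by rewrite v0 w0.
Qed.

End BalancedMoves.

Section ZeroLabellings.
Variables (m n : nat) (T : finType).
Implicit Types (v w : vec m n) (f : 'I_m -> T).

Definition zero_labelling v f := forall l : T, n %| vsum v [set x | f x == l].

Lemma zero_labelling_comp v f (g : T -> T) :
  zero_labelling v f -> zero_labelling v (g \o f).
Proof.
move=> vf l; rewrite /vsum (partition_big f (fun l' => g l' == l)) => [|x];
  last by rewrite inE.
apply: dvdn_sum => l' /eqP gl'; have := vf l'; congr (_ %| _).
apply: eq_bigl => x; rewrite !inE /=.
by have [->|_] := eqVneq (f x) l'; rewrite ?gl' ?eqxx ?andbF.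
Qed.

Lemma zero_labelling_balanced v w f i j : balanced_move i j v w -> f i = f j ->
  zero_labelling v f -> zero_labelling w f.
Proof.
move=> mv fij vf l; have := vf l; rewrite /dvdn.
have [<-|li] := eqVneq (f i) l.
  by rewrite (vsum_balanced_in mv) // inE ?fij.
by rewrite (vsum_balanced_out mv) // inE -?fij.
Qed.

Lemma card_imset_merge (A : {set T}) (a c : T) :
  #|A| <= #|[set (if y == a then c else y) | y in A]|.+1.
Proof.
have sub : A :\ a \subset [set (if y == a then c else y) | y in A].
  by apply/subsetP => y /setD1P [ya yA]; apply/imsetP; exists y; rewrite ?(negbTE ya).
by have := subset_leq_card sub; rewrite (cardsD1 a A); case: (a \in A) => /=; lia.
Qed.

Lemma zero_labelling_step v w f : csr_adj v w -> zero_labelling v f ->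
  exists f' : 'I_m -> T, zero_labelling w f' /\ #|f @: setT| <= #|f' @: setT|.+1.
Proof.
case/csr_adj_balanced => i [j mv] vf.
pose g l := if l == f j then f i else l.
exists (g \o f); split; last by rewrite (imset_comp g f); apply: card_imset_merge.
apply: zero_labelling_balanced mv _ (zero_labelling_comp g vf).
by rewrite /= /g eqxx; case: ifP.
Qed.

Lemma zero_labelling_path v p f : path (@csr_adj m n) v p -> zero_labelling v f ->
  exists f' : 'I_m -> T,
    zero_labelling (last v p) f' /\ #|f @: setT| <= #|f' @: setT| + size p.
Proof.
elim: p v f => [|w p IH] v f /=; first by exists f; rewrite addn0.
case/andP => vw wp vf.
have [f1 [wf1 le1]] := zero_labelling_step vw vf.
have [f2 [pf2 le2]] := IH _ _ wp wf1.
by exists f2; split; rewrite //= addnS (leq_trans le1) ?ltnS.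
Qed.

Lemma card_preim_partition f : #|preim_partition f setT| = #|f @: setT|.
Proof.
rewrite /preim_partition /equivalence_partition.
rewrite (imset_comp (fun l => [set y in setT | l == f y]) f).
apply: card_in_imset => _ _ /imsetP [x1 _ ->] /imsetP [x2 _ ->] e.
have : x1 \in [set y in setT | f x1 == f y] by rewrite !inE eqxx.
by rewrite e !inE => /eqP.
Qed.

Lemma zero_partitioning_preim b f :
  zero_labelling b f -> zero_partitioning b (preim_partition f setT).
Proof.
move=> bf; rewrite /zero_partitioning preim_partitionP.
apply/forall_inP => _ /imsetP [x _ ->]; have := bf (f x).
by congr (_ %| _); apply: eq_bigl => y; rewrite !inE eq_sym.
Qed.

End ZeroLabellings.

Section Transfers.
Variables (m n : nat) (hn : 0 < n) (b : vec m n) (P : {set {set 'I_m}}).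
Hypothesis partP : partition P [set: 'I_m].
Implicit Types (u : vec m n) (B : {set 'I_m}).

Definition diff_in u B := [set x in B | u x != b x].

Definition excess u := \sum_(B in P) #|diff_in u B|.-1.

Definition block_congruent u := forall B, B \in P -> vsum u B = vsum b B %[mod n].

Lemma card_diff_in_neq1 u B : block_congruent u -> B \in P -> #|diff_in u B| != 1.
Proof.
move=> cu BP; apply/cards1P => -[x dux].
have /setIdP [xB uxbx] : x \in diff_in u B by rewrite dux set11.
have ub y : y \in B -> y != x -> u y = b y.
  move=> yB yx; apply/eqP; apply: contraNT yx => uyby.
  by rewrite -in_set1 -dux inE yB.
have := cu B BP; rewrite /vsum (bigD1 x) // [in RHS](bigD1 x) //=.
rewrite (eq_bigr (fun y => b y : nat)) => [|y /andP [yB yx]]; last by rewrite ub.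
move/eqP; rewrite eqn_modDr !modn_small // => /eqP /val_inj uxbx'.
by rewrite uxbx' eqxx in uxbx.
Qed.

Lemma block_congruent_eq u : block_congruent u ->
  [forall B in P, #|diff_in u B| <= 1] -> u = b.
Proof.
move=> cu /forall_inP small; apply/ffunP => x.
have xP : x \in cover P by case/and3P: partP => /eqP ->; rewrite in_setT.
have BP := pblock_mem xP.
have /eqP : #|diff_in u (pblock P x)| == 0.
  by have := small _ BP; have := card_diff_in_neq1 cu BP; case: #|_| => [|[]].
by move/cards0_eq/setP/(_ x); rewrite !inE mem_pblock xP /= => /negbFE/eqP.
Qed.

(* The new value at s is (u_s + u_j - c) mod n; adding n - c avoids truncated
   subtraction. *)
Definition transfer u j s (c : 'I_n) : vec m n :=
  [ffun x => if x == j then c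
             else if x == s then Ordinal (ltn_pmod (u s + u j + (n - c)) hn)
             else u x].

Lemma transfer_balanced u j s c : j != s -> balanced_move j s u (transfer u j s c).
Proof.
move=> njs; split=> // [x xj xs|]; first by rewrite ffunE (negbTE xj) (negbTE xs).
rewrite !ffunE eqxx eq_sym (negbTE njs) eqxx /= modnDmr.
have -> : c + (u s + u j + (n - c)) = u j + u s + n by have := ltn_ord c; lia.
by rewrite modnDr.
Qed.

Lemma transfer_diff u j s c : j != s -> u j != c ->
  [set x | u x != transfer u j s c x] = [set j; s].
Proof.
move=> njs ujc; have [_ agree pair] := transfer_balanced u c njs.
apply/setP => x; rewrite !inE.
have [->|xj] := eqVneq x j; first by rewrite ffunE eqxx ujc.
have [->|xs] /= := eqVneq x s; last by rewrite agree ?eqxx.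
apply: contraNneq ujc => ust; move/eqP: pair; rewrite -ust ffunE eqxx eqn_modDr.
by rewrite !modn_small // => /eqP /val_inj.
Qed.

Lemma csr_adj_transfer u j s c : is_vertex u -> j != s -> u j != c ->
  csr_adj u (transfer u j s c).
Proof.
move=> vu njs ujc; rewrite /csr_adj vu (is_vertex_balanced (transfer_balanced u c njs)) //.
by rewrite transfer_diff // cards2 njs.
Qed.

Lemma block_congruent_transfer u j s c B : j != s -> B \in P -> j \in B -> s \in B ->
  block_congruent u -> block_congruent (transfer u j s c).
Proof.
move=> njs BP jB sB cu B' B'P; have mv := transfer_balanced u c njs.
have [<-|nB] := eqVneq B B'; first by rewrite -(vsum_balanced_in mv) // cu.
case/and3P: partP => _ /trivIsetP/(_ _ _ BP B'P nB) dis _.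
by rewrite -(vsum_balanced_out mv) ?(disjointFr dis) ?cu.
Qed.

Lemma excess_transfer u j s B : B \in P -> j \in diff_in u B -> s \in diff_in u B ->
  j != s -> excess (transfer u j s (b j)) < excess u.
Proof.
move=> BP jD sD njs; have [_ agree _] := transfer_balanced u (b j) njs.
have [/setIdP [jB _] /setIdP [sB _]] := (jD, sD).
rewrite /excess (bigD1 B) // [X in _ < X](bigD1 B) //=.
have -> : \sum_(B' in P | B' != B) #|diff_in (transfer u j s (b j)) B'|.-1
        = \sum_(B' in P | B' != B) #|diff_in u B'|.-1.
  apply: eq_bigr => B' /andP [B'P nB]; congr _.-1; apply: eq_card => x; rewrite !inE.
  case/and3P: partP => _ /trivIsetP/(_ _ _ B'P BP nB) dis _.
  have [xB'|] //= := boolP (x \in B').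
  by rewrite agree //; apply: contraTneq xB' => ->; rewrite (disjointFl dis).
rewrite ltn_add2r.
have sub : diff_in (transfer u j s (b j)) B \subset diff_in u B :\ j.
  apply/subsetP => x /setIdP [xB]; rewrite !inE xB.
  have [->|xj] := eqVneq x j; first by rewrite ffunE !eqxx.
  have [->|xs] := eqVneq x s; first by rewrite (setIdP sD).2.
  by rewrite -agree.
have two : 1 < #|diff_in u B| by apply/card_gt1P; exists j, s.
have := subset_leq_card sub; rewrite (cardsD1 j) jD add1n /= ltnS in two *.
by case: #|_| => // c; apply: leq_trans.
Qed.

Lemma walk_to_target u : is_vertex u -> block_congruent u ->
  exists p, [/\ size p <= excess u, path (@csr_adj m n) u p & last u p = b].
Proof.
have [k] := ubnP (excess u); elim: k u => // k IH u ltuk vu cu.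
have [small|] := boolP [forall B in P, #|diff_in u B| <= 1].
  by exists [::]; rewrite (block_congruent_eq cu small).
case/forall_inPn => B BP; rewrite -ltnNge => /card_gt1P [j [s [jD sD njs]]].
have [/setIdP [jB ujbj] /setIdP [sB _]] := (jD, sD).
have lt := excess_transfer BP jD sD njs.
have [|||p [sp tp lp]] := IH (transfer u j s (b j)).
- exact: leq_trans lt _.
- exact: is_vertex_balanced (transfer_balanced _ _ njs) vu.
- exact: block_congruent_transfer njs BP jB sB cu.
by exists (transfer u j s (b j) :: p); rewrite /= csr_adj_transfer //; split=> //; lia.
Qed.

Lemma excess_le u : excess u <= m - #|P|.
Proof.
have le : excess u <= \sum_(B in P) #|B|.-1.
  apply: leq_sum => B _; rewrite -!subn1 leq_sub2r // subset_leq_card //.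
  by rewrite /diff_in setIdE subsetIl.
have := card_partition partP; rewrite cardsT card_ord.
have -> : \sum_(B in P) #|B| = \sum_(B in P) #|B|.-1 + #|P|.
  rewrite -sum1_card -big_split /=; apply: eq_bigr => B BP.
  rewrite addn1 prednK // card_gt0; case/and3P: partP => _ _ n0.
  by apply: contraNneq n0 => <-.
lia.
Qed.

End Transfers.

Section ZeroVector.
Variables (m n : nat) (hn : 0 < n).

Lemma vsum_zero_vec S : vsum (zero_vec m hn) S = 0.
Proof. by apply: big1 => x _; rewrite ffunE. Qed.

Lemma is_vertex_zero_vec : is_vertex (zero_vec m hn).
Proof. by rewrite is_vertexE vsum_zero_vec dvdn0. Qed.

Lemma zero_labelling_zero_vec : zero_labelling (zero_vec m hn) (@id 'I_m).
Proof. by move=> l; rewrite vsum_zero_vec dvdn0. Qed.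

End ZeroVector.

Section DistanceBounds.
Variables (m n : nat) (hm : 0 < m) (hn : 0 < n).

Lemma leq_tau (b : vec m n) P : zero_partitioning b P -> #|P| <= tau b.
Proof. exact: leq_bigmax_cond. Qed.

Lemma tau_attained (b : vec m n) : is_vertex b ->
  exists2 P, zero_partitioning b P & #|P| = tau b.
Proof.
move=> hb; have [|P zP tauP] := eq_bigmax_cond (fun P => #|P|) (A := zero_partitioning b).
  apply/card_gt0P; exists [set setT]; rewrite unfold_in; apply/andP; split.
    apply/and3P; split; [by rewrite cover1 | exact: trivIset1 |].
    by rewrite inE eq_sym; apply/set0Pn; exists (Ordinal hm).
  by apply/forall_inP => B; rewrite inE => /eqP ->; move: hb; rewrite is_vertexE.
by exists P; rewrite // /tau tauP.
Qed.

Lemma dist_from_zero_lower p : path (@csr_adj m n) (zero_vec m hn) p ->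
  m - tau (last (zero_vec m hn) p) <= size p.
Proof.
move=> zp; have [f [bf le]] := zero_labelling_path zp (zero_labelling_zero_vec hn).
have := leq_tau (zero_partitioning_preim bf); rewrite card_preim_partition.
by move: le; rewrite imset_id cardsT card_ord; lia.
Qed.

Lemma dist_from_zero_upper (b : vec m n) : is_vertex b ->
  exists p, [/\ size p <= m - tau b, path (@csr_adj m n) (zero_vec m hn) p
              & last (zero_vec m hn) p = b].
Proof.
move=> hb; have [P /andP [partP zP] <-] := tau_attained hb.
have cong0 : block_congruent b P (zero_vec m hn).
  by move=> B BP; rewrite vsum_zero_vec mod0n (eqP (forall_inP zP B BP)).
have [p [sp zp lp]] := walk_to_target hn partP (is_vertex_zero_vec m hn) cong0.
by exists p; split=> //; apply: leq_trans sp _; apply: excess_le.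
Qed.

End DistanceBounds.

Theorem lemma1 (m n : nat) (hm : 0 < m) (hn : 0 < n) (b : vec m n) :
  is_vertex b -> csr_dist_is (zero_vec m hn) b (m - tau b).
Proof.
move=> hb; have [p [sp zp lp]] := dist_from_zero_upper hm hn hb.
have lower k : walk_len k (zero_vec m hn) b -> m - tau b <= k.
  by case=> _ [q [<- zq <-]]; exact: dist_from_zero_lower.
have sizep : size p = m - tau b.
  by apply/eqP; rewrite eqn_leq sp lower //; split; [exact: is_vertex_zero_vec | exists p].
split=> //; split; first exact: is_vertex_zero_vec.
by exists p; rewrite sizep.
Qed.
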